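(* Let $M$ be a matroid, $\psi\colon E(M)\to\Gamma$ a labeling to an abelian group, and $F\subseteq\Gamma$ with $|F|=2$. If $M$ has at least one $F$-avoiding basis, then for every basis $B$ of $M$ there exists an $F$-avoiding basis $B^*$ with $|B\setminus B^*|\le2$.
   Context: $\psi(S):=\sum_{x\in S}\psi(x)$; a basis $B$ is $F$-avoiding if $\psi(B)\notin F$. *)

From HB Require Import structures.
From mathcomp Require Import all_boot all_algebra.
Set Implicit Arguments. Unset Strict Implicit. Unset Printing Implicit Defensive.
Import GRing.Theory.
Local Open Scope ring_scope.

Definition matroid_bases (T : finType) (bases : {set {set T}}) : Prop :=
  (exists B, B \in bases) /\
  (forall B1 B2, B1 \in bases -> B2 \in bases ->
     forall x, x \in B1 :\: B2 ->
       exists2 y, y \in B2 :\: B1 & (B1 :\ x) :|: [set y] \in bases).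

Record matroid (T : finType) := Matroid {
  bases : {set {set T}};
  basesP : matroid_bases bases
}.

Definition psiS (T : finType) (G : zmodType) (psi : T -> G) (S : {set T}) : G :=
  \sum_(x in S) psi x.

Definition F_avoiding (T : finType) (G : zmodType) (psi : T -> G)
  (F : seq G) (B : {set T}) : bool :=
  psiS psi B \notin F.

From mathcomp Require Import all_boot all_algebra.
Set Implicit Arguments. Unset Strict Implicit. Unset Printing Implicit Defensive.

(* Fix an F-avoiding basis C and induct on |B \ C|: one exchange step moves B closer to C, and
   the induction hypothesis yields an avoiding basis D with |B \ D| <= 3.  So it suffices to
   rule out |B \ D| = 3 when every basis E with |B \ E| <= 2 has psi(E) in F.  Then only the
   bases (B n D) + X matter, X a 3-subset of the six points of D \ B and B \ D.  If D - d + b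
   and B - b + d are both bases, their labels lie in F and add up to psi(D) + psi(B); as psi(D)
   is not in F the two labels coincide, i.e. 2 (psi b - psi d) = psi(B) - psi(D), and this
   propagates along 4-cycles d b' d' b.  A finite check over all exchange-closed families of
   3-subsets of six points shows that these pairs always cover a perfect matching between
   D \ B and B \ D.  Summing over it gives 3 (psi(B) - psi(D)) = 2 (psi(B) - psi(D)), hence
   psi(D) = psi(B) is in F. *)

Section Bases.
Variables (T : finType) (M : matroid T).

Lemma bases_exchange B1 B2 x : B1 \in bases M -> B2 \in bases M -> x \in B1 :\: B2 ->
  exists2 y, y \in B2 :\: B1 & B1 :\ x :|: [set y] \in bases M.
Proof. by move=> h1 h2; case: (basesP M) => _ exchange; apply: exchange h1 h2 x. Qed.

Lemma card_exchange (A : {set T}) x y : x \in A -> y \notin A -> #|A :\ x :|: [set y]| = #|A|.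
Proof.
by move=> xA yA; rewrite setUC cardsU1 (cardsD1 x A) xA !inE negb_and yA orbT.
Qed.

Lemma setD_exchange (A C : {set T}) x y : y \in C -> (A :\ x :|: [set y]) :\: C = (A :\: C) :\ x.
Proof.
move=> yC; apply/setP => z; rewrite !inE.
by case: (eqVneq z y) => [->|_]; rewrite ?yC ?andbF ?orbF // andbCA.
Qed.

Lemma card_bases_le B1 B2 : B1 \in bases M -> B2 \in bases M -> #|B1| <= #|B2|.
Proof.
move=> + h2; have [n] := ubnP #|B1 :\: B2|; elim: n B1 => // n IH B1 lt_n h1.
have [/eqP|[x hx]] := set_0Vmem (B1 :\: B2); first by rewrite setD_eq0 => /subset_leq_card.
have [y hy h1'] := bases_exchange h1 h2 hx.
move: (hx) hy; rewrite !inE => /andP[_ x1] /andP[y1 y2].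
rewrite -(card_exchange x1 y1); apply: IH h1'.
by rewrite setD_exchange // -ltnS (leq_trans _ lt_n) // (cardsD1 x (B1 :\: B2)) hx.
Qed.

Lemma card_bases_eq B1 B2 : B1 \in bases M -> B2 \in bases M -> #|B1| = #|B2|.
Proof. by move=> h1 h2; apply/eqP; rewrite eqn_leq !card_bases_le. Qed.

End Bases.

(* [if ok pre then _ else true] rather than [ok pre ==> _]: the VM evaluates the arguments
   of [implb], which would defeat the pruning. *)
Fixpoint pruned_search (ok goal : seq bool -> bool) n pre : bool :=
  if ok pre then
    if n is n'.+1 then
      pruned_search ok goal n' (rcons pre true) && pruned_search ok goal n' (rcons pre false)
    else goal pre
  else true.

Lemma pruned_searchP ok goal n pre : pruned_search ok goal n pre ->
  forall l, size l = n -> (forall k, k <= n -> ok (pre ++ take k l)) -> goal (pre ++ l).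
Proof.
elim: n pre => [|n IH] pre /= + l sz ok_l; have := ok_l 0 isT; rewrite take0 cats0 => ->.
  by move: ok_l; rewrite (size0nil sz) cats0.
case: l sz ok_l => // b l [sz] ok_l /andP[s_true s_false]; rewrite -cat_rcons.
apply: IH sz _ => [|k le_kn]; first by case: b {ok_l}.
by rewrite cat_rcons; apply: (ok_l k.+1).
Qed.

(* The points of D \ B are numbered 0, 1, 2 and those of B \ D are numbered 3, 4, 5.  A
   configuration [c] lists, for each triple of [triples], whether the triple (together with
   the common part of B and D) is a basis. *)
Definition triples : seq (seq nat) :=
  flatten [seq [seq [:: i; j; k] | j <- iota i.+1 (5 - i), k <- iota j.+1 (5 - j)] | i <- iota 0 6].

Definition exch (t : seq nat) x y := sort leq (y :: rem x t).

Definition isbase (c : seq bool) t := nth false c (index t triples).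

(* The rule (i, j, ks) is the exchange axiom for the triples numbered i and j and one point
   of the first not in the second: if both are bases, so is one of the triples numbered ks. *)
Definition exchange_rules : seq (nat * nat * seq nat) :=
  flatten [seq flatten [seq [seq (index t1 triples, index t2 triples,
      [seq index (exch t1 x y) triples | y <- t2 & y \notin t1]) | x <- t1 & x \notin t2]
    | t2 <- triples] | t1 <- triples].

Definition rule_holds (c : seq bool) (r : nat * nat * seq nat) :=
  nth false c r.1.1 ==> nth false c r.1.2 ==> has (nth false c) r.2.

Definition exchange_closed c := all (rule_holds c) exchange_rules.

Definition D0 := [:: 0; 1; 2].
Definition B0 := [:: 3; 4; 5].

Definition exchangeable c i b := isbase c (exch D0 i b) && isbase c (exch B0 b i).

(* [i] and [b] are joined by a path of length 1 or 3 of exchangeable pairs. *)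
Definition linked c i b :=
  has (fun j => has (fun a => [&& exchangeable c i a, exchangeable c j a & exchangeable c j b]) B0) D0.

Definition matched c := has (all2 (linked c) D0) (permutations B0).

Definition rule_scope (r : nat * nat * seq nat) := foldr maxn 0 [:: r.1.1, r.1.2 & r.2].

(* Group [k] collects the rules whose largest index is [k]; they are decided with bit [k]. *)
Definition rules_by_scope := [seq [seq r <- exchange_rules | rule_scope r == k] | k <- iota 0 20].

Definition prefix_closed groups pre := all (rule_holds pre) (nth [::] groups (size pre).-1).

Lemma six_point_check :
  pruned_search (prefix_closed rules_by_scope) (fun c => if isbase c B0 then matched c else true)
    19 [:: true].
Proof. by vm_compute. Qed.

Lemma leq_foldr_maxn (s : seq nat) i : i \in s -> i <= foldr maxn 0 s.
Proof.
elim: s => //= j s IH; rewrite inE => /predU1P[->|/IH]; first exact: leq_maxl.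
by move/leq_trans; apply; apply: leq_maxr.
Qed.

Lemma rule_holds_take c k r : rule_scope r < k -> rule_holds (take k c) r = rule_holds c r.
Proof.
move=> lt_k; have in_k i : i \in [:: r.1.1, r.1.2 & r.2] -> nth false (take k c) i = nth false c i.
  by move/leq_foldr_maxn => le_i; apply: nth_take; apply: leq_ltn_trans lt_k.
rewrite /rule_holds !in_k ?mem_head ?inE ?eqxx ?orbT //; congr (_ ==> (_ ==> _)).
by apply: eq_in_has => i r2_i; apply: in_k; rewrite !inE r2_i !orbT.
Qed.

Lemma exchange_closed_matched c : size c = 20 -> isbase c D0 -> isbase c B0 ->
  exchange_closed c -> matched c.
Proof.
move=> + + B0_c; rewrite /isbase (_ : index D0 triples = 0) //.
case: c B0_c => [|[] l] // B0_c [sz] _ /allP closed_c.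
have := pruned_searchP six_point_check sz; rewrite cat1s B0_c; apply=> k le_k.
rewrite /prefix_closed /= size_takel ?sz // -/(take k.+1 (true :: l)).
rewrite (nth_map 0) ?size_iota ?ltnS // nth_iota //; apply/allP => r.
by rewrite mem_filter => /andP[/eqP scope_r /closed_c]; rewrite rule_holds_take ?scope_r.
Qed.

Lemma triples_wf : all (fun t => uniq t && all (fun i => i < 6) t) triples.
Proof. by vm_compute. Qed.

Lemma triples_exch_closed : all (fun t1 => all (fun t2 => all (fun x => all (fun y =>
  exch t1 x y \in triples) [seq y <- t2 | y \notin t1]) [seq x <- t1 | x \notin t2]) triples) triples.
Proof. by vm_compute. Qed.

Lemma triples_meet_B0 : all (fun t => (t == D0) || has (fun j => 3 <= j) t) triples.
Proof. by vm_compute. Qed.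

Lemma exch_D0_B0_triples : all (fun i => all (fun b => [&& exch D0 i b \in triples,
  exch D0 i b != D0, exch B0 b i \in triples & exch B0 b i != D0]) B0) D0.
Proof. by vm_compute. Qed.

Section MatchedValues.
Import GRing.Theory.
Local Open Scope ring_scope.
Variables (G : zmodType) (w : nat -> G) (c0 f1 f2 : G).
Local Notation F := [:: f1; f2].
Local Notation val t := (c0 + \sum_(k <- t) w k).

Lemma pair_sum_eq x y u1 u2 : y \in F -> u1 \in F -> u2 \in F -> x \notin F ->
  x + y = u1 + u2 -> u1 = u2.
Proof.
move=> yF u1F u2F xF e; have [//|ne12] := eqVneq u1 u2; case/negP: xF.
have /orP[/eqP y_u1|/eqP y_u2] : (y == u1) || (y == u2).
  by move: yF u1F u2F ne12; rewrite !inE; do 3!case/orP=> /eqP->; rewrite ?eqxx ?orbT.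
- by move: e; rewrite y_u1 [u1 + u2]addrC => /addIr ->.
- by move: e; rewrite y_u2 => /addIr ->.
Qed.

Lemma val_exch t x y : x \in t -> val (exch t x y) = val t + (w y - w x).
Proof.
move=> xt; have sort_exch : perm_eq (exch t x y) (y :: rem x t) by rewrite perm_sort.
rewrite (perm_big _ sort_exch) (perm_big _ (perm_to_rem xt)) !big_cons.
by rewrite /= addrACA [w x + _]addrC addrK addrA.
Qed.

Variable c : seq bool.
Hypotheses (near_F : forall t, t \in triples -> t != D0 -> isbase c t -> val t \in F)
  (B0_c : isbase c B0) (D0_notF : val D0 \notin F).

Lemma exchangeable_delta i b : i \in D0 -> b \in B0 -> exchangeable c i b ->
  (w b - w i) *+ 2 = val B0 - val D0.
Proof.
move=> iD bB /andP[P_c Q_c]; set x := val D0; set y := val B0.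
have /and4P[P3 PD Q3 QD] := allP (allP exch_D0_B0_triples i iD) b bB.
have u1E : val (exch D0 i b) = x + (w b - w i) by rewrite val_exch.
have u2E : val (exch B0 b i) = y - (w b - w i) by rewrite val_exch // opprB.
have sum_eq : x + y = val (exch D0 i b) + val (exch B0 b i).
  by rewrite u1E u2E [RHS]addrACA subrr addr0.
have yF : y \in F by apply: near_F.
have := pair_sum_eq yF (near_F P3 PD P_c) (near_F Q3 QD Q_c) D0_notF sum_eq.
rewrite u1E u2E => /(congr1 (+%R^~ (w b - w i))).
by rewrite subrK => <-; rewrite -(addrA x) [RHS]addrC addKr mulr2n.
Qed.

Lemma linked_delta i b : i \in D0 -> b \in B0 -> linked c i b ->
  (w b - w i) *+ 2 = val B0 - val D0.
Proof.
move=> iD bB /hasP[j jD /hasP[a aB /and3P[ia ja jb]]].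
have -> : w b - w i = (w a - w i) - (w a - w j) + (w b - w j).
  by rewrite opprB [w a - w i + _]addrC (subrKA (w a)) [RHS]addrC (subrKA (w j)).
by rewrite mulrnDl mulrnBl !exchangeable_delta // subrr add0r.
Qed.

Lemma not_matched : ~~ matched c.
Proof.
apply/hasP => -[p]; rewrite mem_permutations all2E => pB /andP[/eqP size_p /allP linked_p].
set d := val B0 - val D0.
have size_le : (size p <= size D0)%N /\ (size D0 <= size p)%N by rewrite size_p.
have sum_delta : \sum_(k <- zip D0 p) (w k.2 - w k.1) = d.
  rewrite sumrB -(big_map snd xpredT w) -(big_map fst xpredT w) -/(unzip2 _) -/(unzip1 _).
  rewrite (unzip1_zip size_le.2) (unzip2_zip size_le.1).
  by rewrite /d (perm_big _ pB) opprD addrACA subrr add0r.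
have : d *+ 3 = d *+ 2.
  rewrite -{2}sum_delta -sumrMnl (eq_big_seq (fun=> d)) => [|k k_in].
    by rewrite big_const_seq count_predT size_zip -size_p iter_addr_0.
  have k1D : k.1 \in D0 by rewrite -(unzip1_zip size_le.2); apply: map_f.
  have k2B : k.2 \in B0 by rewrite -(perm_mem pB) -(unzip2_zip size_le.1); apply: map_f.
  exact: linked_delta k1D k2B (linked_p k k_in).
move/eqP; rewrite mulrS -subr_eq0 addrK subr_eq0 => /eqP B0_eq_D0.
by move: D0_notF; rewrite -B0_eq_D0 => /negP; apply; apply: near_F.
Qed.

End MatchedValues.

Section SixPoints.
Variables (T : finType) (M : matroid T) (B D : {set T}).
(* Default value for [nth]; only indices below 6 are used. *)
Variable x0 : T.
Hypotheses (B_basis : B \in bases M) (D_basis : D \in bases M) (card_BD : #|B :\: D| = 3).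

Definition six_points := enum (D :\: B) ++ enum (B :\: D).
Local Notation pt i := (nth x0 six_points i).

Definition embed (t : seq nat) := (B :&: D) :|: [set z in map (fun i => pt i) t].

Definition embed_config := [seq embed t \in bases M | t <- triples].

Lemma card_DB : #|D :\: B| = 3.
Proof. by rewrite cardsD (card_bases_eq D_basis B_basis) setIC -cardsD. Qed.

Lemma size_six_points : size six_points = 6.
Proof. by rewrite size_cat -!cardE card_DB card_BD. Qed.

Lemma uniq_six_points : uniq six_points.
Proof.
rewrite cat_uniq !enum_uniq andbT /=; apply/hasPn => z.
by rewrite /= !mem_enum !inE => /andP[_ ->].
Qed.

Lemma pt_notin_common i : i < 6 -> pt i \notin B :&: D.
Proof.
rewrite -size_six_points => /(mem_nth x0); rewrite mem_cat !mem_enum !inE.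
by case/orP=> /andP[/negbTE-> ->]; rewrite ?andbF.
Qed.

Lemma mem_map_pt t j : all (fun i => i < 6) t -> j < 6 ->
  (pt j \in map (fun i => pt i) t) = (j \in t).
Proof.
move=> /allP t6 j6; apply/mapP/idP => [[i it /eqP]|jt]; last by exists j.
by rewrite nth_uniq ?size_six_points ?uniq_six_points ?j6 ?t6 // => /eqP->.
Qed.

Lemma embed_D0 : embed D0 = D.
Proof.
rewrite /embed (_ : D0 = iota 0 3) // map_nth_iota0 ?size_six_points //.
rewrite take_size_cat -?cardE ?card_DB //; apply/setP => z.
by rewrite !inE mem_enum !inE; case: (z \in B); case: (z \in D).
Qed.

Lemma embed_B0 : embed B0 = B.
Proof.
rewrite /embed (_ : B0 = iota 3 3) // map_nth_iota ?size_six_points //.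
rewrite drop_size_cat -?cardE ?card_DB // take_oversize -?cardE ?card_BD //.
by apply/setP => z; rewrite !inE mem_enum !inE; case: (z \in B); case: (z \in D).
Qed.

Lemma embed_exch t x y : uniq t -> all (fun i => i < 6) t -> x \in t -> y < 6 -> y \notin t ->
  embed (exch t x y) = embed t :\ pt x :|: [set pt y].
Proof.
move=> ut t6 xt y6 yt; have /allP t6' := t6; have x6 := t6' x xt.
have sort_exch : perm_eq (exch t x y) (y :: rem x t) by rewrite perm_sort.
apply/setP => z; rewrite !in_setU in_setD1 in_set1 !in_set.
rewrite (perm_mem (perm_map _ sort_exch)) map_cons in_cons -!in_setI.
have [->|zx] := eqVneq z (pt x).
  have rem6 : all (fun i => i < 6) (rem x t) by apply/allP => i /mem_rem /t6'.
  by rewrite (negbTE (pt_notin_common x6)) (mem_map_pt rem6 x6) mem_rem_uniqF //= orbF.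
have -> : (z \in map (fun i => pt i) (rem x t)) = (z \in map (fun i => pt i) t).
  rewrite rem_filter //; apply/mapP/mapP => [[i]|[i it z_eq]].
    by rewrite mem_filter => /andP[_ it] ->; exists i.
  by exists i => //; rewrite mem_filter it andbT; apply: contra_neq zx => <-.
by rewrite /= orbA orbAC.
Qed.

Lemma isbase_embed_config t : t \in triples -> isbase embed_config t = (embed t \in bases M).
Proof. by move=> tt; rewrite /isbase (nth_map [::]) ?index_mem ?nth_index. Qed.

Lemma embed_config_closed : exchange_closed embed_config.
Proof.
apply/allP => r /flatten_mapP[t1 t1_in /flatten_mapP[t2 t2_in /mapP[x x_in ->{r}]]].
have /andP[x_t2 x_t1] : (x \notin t2) && (x \in t1) by move: x_in; rewrite mem_filter.
have /andP[u1 t1_6] := allP triples_wf t1 t1_in; have /allP t1_6' := t1_6.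
have /andP[_ /allP t2_6] := allP triples_wf t2 t2_in; have x6 := t1_6' x x_t1.
rewrite /rule_holds -/(isbase _ t1) -/(isbase _ t2) !isbase_embed_config //.
apply/implyP => t1_basis; apply/implyP => t2_basis.
have x_diff : pt x \in embed t1 :\: embed t2.
  rewrite !inE -!in_setI (negbTE (pt_notin_common x6)) !mem_map_pt ?x_t1 ?x_t2 //.
  by apply/allP.
have [z] := bases_exchange t1_basis t2_basis x_diff.
rewrite /embed in_setD !in_setU negb_or => /andP[/andP[z_common z_t1]].
rewrite (negbTE z_common) in_set orFb => /mapP[y y_t2 z_eq]; subst z.
have y6 := t2_6 y y_t2; rewrite in_set mem_map_pt // in z_t1.
rewrite -/(embed t1) -embed_exch // => exch_basis.
have y_in : y \in [seq y <- t2 | y \notin t1] by rewrite mem_filter z_t1.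
have := allP (allP (allP (allP triples_exch_closed t1 t1_in) t2 t2_in) x x_in) y y_in.
move=> exch_in; apply/hasP; exists (index (exch t1 x y) triples); first exact: map_f.
by rewrite -/(isbase _ _) isbase_embed_config.
Qed.

Lemma psiS_embed (G : zmodType) (psi : T -> G) t : uniq t -> all (fun i => i < 6) t ->
  psiS psi (embed t) = (psiS psi (B :&: D) + \sum_(k <- t) psi (pt k))%R.
Proof.
move=> ut t6; set S := [set z in map (fun i => pt i) t].
have disj : [disjoint B :&: D & S].
  apply/pred0P => z /=; apply/negP => /andP[zBD /[!in_set] /mapP[i /(allP t6) i6 z_eq]].
  by move: zBD; rewrite z_eq; apply/negP/pt_notin_common.
rewrite /psiS /embed (eq_bigl [predU B :&: D & S]) ?bigU // => [|z]; last by rewrite !inE.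
congr (_ + _)%R; rewrite -(big_map (fun k => pt k) xpredT) big_uniq.
  by apply: eq_bigl => z; rewrite in_set.
rewrite map_inj_in_uniq // => i j /(allP t6) i6 /(allP t6) j6 /eqP.
by rewrite nth_uniq ?size_six_points ?uniq_six_points // => /eqP.
Qed.

Lemma card_B_minus_embed t : all (fun i => i < 6) t -> has (fun j => 3 <= j) t ->
  #|B :\: embed t| <= 2.
Proof.
move=> t6 /hasP[j jt j3]; have j6 := allP t6 j jt.
have jB : pt j \in B :\: D.
  rewrite nth_cat -cardE card_DB ltnNge j3 /= -(mem_enum (B :\: D)) mem_nth //.
  by rewrite -cardE card_BD ltn_subLR.
have sub : B :\: embed t \subset (B :\: D) :\ pt j.
  apply/subsetP => z; rewrite /embed !inE -in_setI negb_or => /andP[/andP[zBD zt] zB].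
  rewrite zB andbT; apply/andP; split; last by move: zBD; rewrite in_setI zB.
  by apply: contraNneq zt => ->; apply: map_f.
by rewrite -ltnS -card_BD (cardsD1 (pt j) (B :\: D)) jB add1n ltnS subset_leq_card.
Qed.

Lemma distance3_value_mem (G : zmodType) (psi : T -> G) (f1 f2 : G) :
  (forall E, E \in bases M -> #|B :\: E| <= 2 -> psiS psi E \in [:: f1; f2]) ->
  psiS psi D \in [:: f1; f2].
Proof.
move=> near_F; apply/contraT => D_notF.
have near_F' t : t \in triples -> t != D0 -> isbase embed_config t ->
    (psiS psi (B :&: D) + \sum_(k <- t) psi (pt k))%R \in [:: f1; f2].
  move=> tt tD; rewrite isbase_embed_config // => t_basis.
  have /andP[ut t6] := allP triples_wf t tt.
  rewrite -psiS_embed //; apply: near_F t_basis (card_B_minus_embed t6 _).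
  by have := allP triples_meet_B0 t tt; rewrite (negbTE tD).
have B0_c : isbase embed_config B0 by rewrite isbase_embed_config ?embed_B0.
rewrite -embed_D0 psiS_embed // in D_notF.
case/negP: (not_matched near_F' B0_c D_notF).
apply: (exchange_closed_matched _ _ B0_c embed_config_closed); first by rewrite size_map.
by rewrite isbase_embed_config ?embed_D0.
Qed.

End SixPoints.

Lemma near_avoiding_basis (T : finType) (G : zmodType) (M : matroid T) (psi : T -> G)
    (f1 f2 : G) C : C \in bases M -> F_avoiding psi [:: f1; f2] C ->
  forall B, B \in bases M ->
  exists Bs, [/\ Bs \in bases M, F_avoiding psi [:: f1; f2] Bs & #|B :\: Bs| <= 2].
Proof.
move=> C_basis C_av B; have [n] := ubnP #|B :\: C|; elim: n B => // n IH B lt_n B_basis.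
have [le2|gt2] := leqP #|B :\: C| 2; first by exists C.
have /card_gt0P[y yBC] : 0 < #|B :\: C| by apply: leq_ltn_trans gt2.
have [x xCB B'_basis] := bases_exchange B_basis C_basis yBC.
have xC : x \in C by case/setDP: xCB.
have [|D [D_basis D_av B'D]] := IH _ _ B'_basis.
  by rewrite setD_exchange // -ltnS (leq_trans _ lt_n) // (cardsD1 y (B :\: C)) yBC.
have [le2'|gt2'] := leqP #|B :\: D| 2; first by exists D.
have BD3 : #|B :\: D| = 3.
  apply/eqP; rewrite eqn_leq gt2' andbT.
  have sub : B :\: D \subset y |: ((B :\ y :|: [set x]) :\: D).
    by apply/subsetP => z; rewrite !inE; case: eqP => //= _ /andP[-> ->].
  by rewrite (leq_trans (subset_leq_card sub)) // cardsU1 (leq_add (leq_b1 _) B'D).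
have [/existsP[E /and3P[E_basis E_av BE]]|none] :=
  boolP [exists E, [&& E \in bases M, F_avoiding psi [:: f1; f2] E & #|B :\: E| <= 2]].
  by exists E.
case/negP: D_av; apply: (distance3_value_mem y B_basis D_basis BD3) => E E_basis BE.
apply: contraR none => E_av; apply/existsP; exists E.
by rewrite E_basis BE andbT; exact: E_av.
Qed.

Theorem theorem5p33 (T : finType) (G : zmodType) (M : matroid T)
  (psi : T -> G) (F : seq G) :
  uniq F -> size F = 2 ->
  (exists B0, B0 \in bases M /\ F_avoiding psi F B0) ->
  forall B, B \in bases M ->
    exists Bs, [/\ Bs \in bases M, F_avoiding psi F Bs & #|B :\: Bs| <= 2].
Proof.
move=> _ size_F [C [C_basis C_av]] B B_basis.
case: F size_F C_av => [|f1 [|f2 []]] // _ C_av.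
exact: near_avoiding_basis C_basis C_av B B_basis.
Qed.
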